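(* Let $S$ be a monoid such that the words $yxxty$ and $ytxxy$ (with $x,y,t$ distinct variables) are isoterms for $S$. Then for every $n\ge1$ the word $z_1t_1z_2t_2\cdots z_nt_n\,xx\,z_1z_2\cdots z_n$ (with $x,z_1,\dots,z_n,t_1,\dots,t_n$ distinct variables) is an isoterm for $S$.
   Context: Words are elements of the free semigroup over a countably infinite alphabet of variables. A monoid $S$ satisfies an identity $\mathbf u\approx\mathbf v$ if both sides are equal under every evaluation of the variables in $S$. A word $\mathbf w$ is an isoterm for $S$ if $S$ satisfies no identity $\mathbf w\approx\mathbf w'$ with $\mathbf w'\ne\mathbf w$. *)

From mathcomp Require Import all_boot.
Set Implicit Arguments. Unset Strict Implicit. Unset Printing Implicit Defensive.

Record monoid := Monoid {
  mcar :> Type;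
  mop : mcar -> mcar -> mcar;
  munit : mcar;
  mopA : forall a b c, mop a (mop b c) = mop (mop a b) c;
  mop1 : forall a, mop munit a = a;
  mopr1 : forall a, mop a munit = a
}.

Definition word := seq nat.
Definition is_word (w : word) : Prop := w <> [::].

Definition eval (S : monoid) (phi : nat -> S) (w : word) : S :=
  foldr (fun v acc => mop (phi v) acc) (munit S) w.

Definition satisfies (S : monoid) (u v : word) : Prop :=
  forall phi : nat -> S, eval phi u = eval phi v.

Definition isoterm (S : monoid) (w : word) : Prop :=
  forall w' : word, is_word w' -> satisfies S w w' -> w' = w.

(* Deleting letters preserves identities, and a word is determined by its
   restrictions to all pairs of letters.  Restricting the word W to {z_k, t_k, x}
   gives z_k t_k x x z_k, an isoterm by hypothesis.  Restricting it to
   {z_i, t_i, z_j, t_j, x} with i < j gives, up to renaming, the case n = 2;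
   there the restrictions to the two blocks leave finitely many candidates, and
   each wrong one has a three-letter restriction of the form y t x x y that
   differs from that of W.  So every w with W = w in S agrees with W on each
   pair of letters, whence w = W. *)

From mathcomp Require Import all_boot zify.

Set Implicit Arguments.
Unset Strict Implicit.
Unset Printing Implicit Defensive.

Definition restrict (K u : word) : word := filter (mem K) u.

Lemma eq_restrict (K K' u : word) : K =i K' -> restrict K u = restrict K' u.
Proof. by move=> eqK; apply: eq_filter => a; rewrite /= eqK. Qed.

Lemma restrict_restrict (K K' u : word) :
  {subset K <= K'} -> restrict K (restrict K' u) = restrict K u.
Proof.
move=> sKK'; rewrite /restrict -filter_predI; apply: eq_filter => a /=.
by case: (boolP (a \in K)) => //= /sKK' ->.
Qed.

Lemma restrict_sub_eq (K K' u v : word) :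
  restrict K' u = restrict K' v -> {subset K <= K'} -> restrict K u = restrict K v.
Proof.
by move=> eqK' sKK'; rewrite -(restrict_restrict u sKK') -(restrict_restrict v sKK') eqK'.
Qed.

Lemma count_mem_restrict (K u : word) a :
  a \in K -> count_mem a (restrict K u) = count_mem a u.
Proof.
move=> aK; rewrite count_filter; apply: eq_count => b /=.
by case: eqP => // ->; rewrite aK.
Qed.

Lemma restrict_pairs_inj (u v : word) :
  (forall a b, a \in u ++ v -> b \in u ++ v ->
     restrict [:: a; b] u = restrict [:: a; b] v) -> u = v.
Proof.
elim: u v => [|a u IH] [|b v] //= eq_pairs.
- by move: (eq_pairs b b); rewrite /restrict /= !inE eqxx => /(_ isT isT).
- by move: (eq_pairs a a); rewrite /restrict /= !inE eqxx => /(_ isT isT).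
have eq_ab : a = b.
  move: (eq_pairs a b); rewrite !inE !mem_cat !inE !eqxx !orbT /restrict /=.
  by move=> /(_ isT isT) [].
subst b; congr cons; apply: IH => c d cuv duv.
have mem_uv e : e \in u ++ v -> e \in a :: u ++ a :: v.
  by rewrite inE !mem_cat inE => /orP[] ->; rewrite !orbT.
move: (eq_pairs c d (mem_uv c cuv) (mem_uv d duv)); rewrite /restrict /=.
by case: ifP => // _ [].
Qed.

Section Identities.

Variable S : monoid.

Lemma eval_cat (phi : nat -> S) (u v : word) :
  eval phi (u ++ v) = mop (eval phi u) (eval phi v).
Proof. by elim: u => [|a u IH] /=; rewrite ?mop1 // IH mopA. Qed.

Lemma satisfies_sym (u v : word) : satisfies S u v -> satisfies S v u.
Proof. by move=> sat phi. Qed.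

Lemma satisfies_map (f : nat -> nat) (u v : word) :
  satisfies S u v -> satisfies S (map f u) (map f v).
Proof.
have evalE phi (w : word) : eval phi (map f w) = eval (phi \o f) w.
  by elim: w => //= a w ->.
by move=> sat phi; rewrite !evalE.
Qed.

(* Deleting letters is the substitution sending them to the unit. *)
Lemma satisfies_filter (P : pred nat) (u v : word) :
  satisfies S u v -> satisfies S (filter P u) (filter P v).
Proof.
move=> sat phi; pose psi a := if P a then phi a else munit S.
have evalE (w : word) : eval phi (filter P w) = eval psi w.
  by elim: w => //= a w IH; rewrite /psi; case: (P a) => /=; rewrite IH ?mop1.
by rewrite !evalE.
Qed.

(* An isoterm cannot be equal to the empty word: [u = 1] would give [u = u u]. *)
Lemma isoterm_eq (u v : word) :
  isoterm S u -> is_word u -> satisfies S u v -> v = u.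
Proof.
move=> iso_u u_ne sat; case: v sat => [|b v] sat; last exact: iso_u.
have /(congr1 size) : u ++ u = u.
  apply: iso_u; first by case: (u) u_ne.
  by move=> phi; rewrite eval_cat !sat /= mop1.
have : size u != 0 by rewrite size_eq0; apply/eqP.
by rewrite size_cat; lia.
Qed.

Lemma restrict_sat_isoterm (K u v : word) :
  satisfies S u v -> isoterm S (restrict K u) -> is_word (restrict K u) ->
  restrict K v = restrict K u.
Proof. by move=> sat iso_uK uK_ne; apply: isoterm_eq (satisfies_filter _ sat). Qed.

Lemma notin_sat_isoterm (K u v : word) a :
  satisfies S u v -> isoterm S (restrict K u) -> is_word (restrict K u) ->
  a \notin u -> a \notin v.
Proof.
move=> sat iso_uK uK_ne a_u; apply/negP => a_v.
have eq_aK : restrict (a :: K) u = restrict K u.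
  by apply: eq_in_filter => b b_u; rewrite /= inE; case: eqP b_u a_u => // -> ->.
have := restrict_sat_isoterm (K := a :: K) sat; rewrite eq_aK => /(_ iso_uK uK_ne).
have : a \in restrict (a :: K) v by rewrite mem_filter /= inE eqxx.
by move=> + eq_vaK; rewrite eq_vaK mem_filter (negbTE a_u) andbF.
Qed.

(* Renaming back with [index] turns the identity into one with left side [c]. *)
Lemma sat_nth_isoterm (L c v : word) :
  uniq L -> isoterm S c -> is_word c -> all (fun k => k < size L) c ->
  {subset v <= L} -> satisfies S (map (nth 0 L) c) v -> v = map (nth 0 L) c.
Proof.
move=> L_uniq iso_c c_ne c_L v_L sat.
have indexK : map (index^~ L) (map (nth 0 L) c) = c.
  by rewrite -map_comp; apply: map_id_in => k /(allP c_L) k_L /=; rewrite index_uniq.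
have <- : map (index^~ L) v = c.
  by apply: isoterm_eq iso_c c_ne _; rewrite -{1}indexK; apply: satisfies_map.
by rewrite -map_comp map_id_in // => a /v_L; apply: nth_index.
Qed.

End Identities.

Definition ytxxy_shaped (w : word) : bool :=
  if w is [:: y; t; x; x'; y'] then [&& x == x', y == y' & uniq [:: x; y; t]] else false.

(* The case n = 2 of the theorem, on the letters z1 = 0, t1 = 1, z2 = 2, t2 = 3, x = 4. *)
Definition W2 : word := [:: 0; 1; 2; 3; 4; 4; 0; 2].

Lemma W2_rivals_refuted :
  all (fun c => [&& restrict [:: 0; 1; 4] c == [:: 0; 1; 4; 4; 0],
                    restrict [:: 2; 3; 4] c == [:: 2; 3; 4; 4; 2] & c != W2] ==>
     has (fun K => ytxxy_shaped (restrict K c) && (restrict K c != restrict K W2))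
       [:: [:: 0; 1; 2]; [:: 1; 2; 4]; [:: 0; 2; 3]])
    (permutations W2).
Proof. by vm_compute. Qed.

Section YtxxyIsoterm.

Variable S : monoid.
Hypothesis ytxxy_isoterm :
  forall x y t : nat, uniq [:: x; y; t] -> isoterm S [:: y; t; x; x; y].

Lemma isoterm_ytxxy_shaped (w : word) : ytxxy_shaped w -> isoterm S w.
Proof.
case: w => [|y [|t [|x [|x' [|y' [|]]]]]] //= /and3P[/eqP <- /eqP <-].
exact: ytxxy_isoterm.
Qed.

Lemma isoterm_W2 : isoterm S W2.
Proof.
move=> c c_ne sat.
have isoL : isoterm S (restrict [:: 0; 1; 4] W2) by apply: isoterm_ytxxy_shaped.
have isoR : isoterm S (restrict [:: 2; 3; 4] W2) by apply: isoterm_ytxxy_shaped.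
have blockL : restrict [:: 0; 1; 4] c = restrict [:: 0; 1; 4] W2.
  by apply: restrict_sat_isoterm sat isoL _.
have blockR : restrict [:: 2; 3; 4] c = restrict [:: 2; 3; 4] W2.
  by apply: restrict_sat_isoterm sat isoR _.
have c_W2 : {subset c <= W2}.
  move=> a a_c; apply/negPn/negP => a_W2; move: a_c; apply/negP.
  by apply: notin_sat_isoterm sat isoL _ a_W2.
have c_perm : perm_eq c W2.
  apply/allP => a a_cW2.
  have count_eq K : a \in K -> restrict K c = restrict K W2 ->
      count_mem a c == count_mem a W2.
    by move=> a_K eqK; rewrite -(count_mem_restrict c a_K) eqK count_mem_restrict.
  have a_W2 : a \in W2 by move: a_cW2; rewrite mem_cat => /orP[/c_W2|].
  have [a_L|a_R] : a \in [:: 0; 1; 4] \/ a \in [:: 2; 3; 4].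
    by move: a_W2; rewrite !inE; lia.
  - exact: count_eq a_L blockL.
  - exact: count_eq a_R blockR.
have := allP W2_rivals_refuted c.
rewrite mem_permutations c_perm blockL blockR !eqxx => /(_ isT) /implyP.
case: (c =P W2) => // _ /(_ isT) /hasP[K _ /andP[shaped]].
case/negP; apply/eqP/esym/isoterm_eq; first exact: isoterm_ytxxy_shaped.
  by case: restrict shaped.
exact/satisfies_sym/satisfies_filter.
Qed.

End YtxxyIsoterm.

Lemma filter_mem_iota (I : seq nat) n :
  sorted ltn I -> all (fun i => i < n) I -> filter (mem I) (iota 0 n) = I.
Proof.
move=> I_sorted /allP I_n; apply: (irr_sorted_eq ltn_trans ltnn) => //.
  exact: (sorted_filter ltn_trans _ (iota_ltn_sorted 0 n)).
move=> i; rewrite mem_filter mem_iota /=.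
by case: (boolP (i \in I)) => //= /I_n.
Qed.

Section Word.

Variables (n x : nat) (z t : nat -> nat).

Definition word_of (s : seq nat) : word :=
  flatten [seq [:: z i; t i] | i <- s] ++ [:: x; x] ++ [seq z i | i <- s].

Definition block k : word := [:: z k; t k; x].

Definition cross i j : word := [:: z i; t i; z j; t j; x].

Lemma restrict_word_of (K : word) (I s : seq nat) :
  x \in K -> {in s, forall i, (z i \in K) = (i \in I) /\ (t i \in K) = (i \in I)} ->
  restrict K (word_of s) = word_of (filter (mem I) s).
Proof.
move=> x_K zt_K; rewrite /restrict /word_of !filter_cat /= x_K.
congr (_ ++ _ :: _ :: _); last first.
  by rewrite filter_map; congr map; apply: eq_in_filter => i /zt_K[].
elim: s zt_K => // i s IH zt_K.
have [z_K t_K] := zt_K i (mem_head i s).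
rewrite /= z_K t_K IH => [|j j_s]; last by apply: zt_K; rewrite inE j_s orbT.
by case: (i \in I).
Qed.

Hypothesis letters_uniq :
  uniq (x :: [seq z i | i <- iota 0 n] ++ [seq t i | i <- iota 0 n]).

(* Distinctness of letters becomes distinctness of their positions in [letters]. *)
Let letters := x :: [seq z i | i <- iota 0 n] ++ [seq t i | i <- iota 0 n].

Lemma x_nth : x = nth 0 letters 0.
Proof. by []. Qed.

Lemma z_nth i : i < n -> z i = nth 0 letters i.+1.
Proof.
move=> lt_in; rewrite /= nth_cat size_map size_iota lt_in.
by rewrite (nth_map 0) ?size_iota ?nth_iota.
Qed.

Lemma t_nth i : i < n -> t i = nth 0 letters (n + i).+1.
Proof.
move=> lt_in; rewrite /= nth_cat size_map size_iota ltnNge leq_addr /= addKn.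
by rewrite (nth_map 0) ?size_iota ?nth_iota.
Qed.

Lemma eq_nth_letters i j : i <= n + n -> j <= n + n ->
  (nth 0 letters i == nth 0 letters j) = (i == j).
Proof.
have size_letters : size letters = (n + n).+1 by rewrite /= size_cat !size_map size_iota.
by move=> le_i le_j; rewrite nth_uniq // size_letters.
Qed.

Lemma mem_block k i : k < n -> i < n ->
  (z i \in block k) = (i \in [:: k]) /\ (t i \in block k) = (i \in [:: k]).
Proof. by move=> lt_kn lt_in; rewrite !inE !z_nth ?t_nth // x_nth !eq_nth_letters; lia. Qed.

Lemma mem_cross i j l : i < n -> j < n -> l < n ->
  (z l \in cross i j) = (l \in [:: i; j]) /\ (t l \in cross i j) = (l \in [:: i; j]).
Proof.
by move=> lt_in lt_jn lt_ln; rewrite !inE !z_nth ?t_nth // x_nth !eq_nth_letters; lia.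
Qed.

Lemma block_uniq k : k < n -> uniq [:: x; z k; t k].
Proof. by move=> lt_kn; rewrite /= !inE !z_nth ?t_nth // x_nth !eq_nth_letters; lia. Qed.

Lemma cross_uniq i j : i < j -> j < n -> uniq (cross i j).
Proof.
move=> lt_ij lt_jn; have lt_in := ltn_trans lt_ij lt_jn.
by rewrite /cross /= !inE !z_nth ?t_nth // x_nth !eq_nth_letters; lia.
Qed.

Lemma restrict_block k : k < n ->
  restrict (block k) (word_of (iota 0 n)) = [:: z k; t k; x; x; z k].
Proof.
move=> lt_kn; rewrite (restrict_word_of (I := [:: k])) ?filter_mem_iota //=.
- by rewrite lt_kn.
- by rewrite /block !inE eqxx !orbT.
by move=> i; rewrite mem_iota => /andP[_ lt_in]; apply: mem_block.
Qed.

Lemma restrict_cross i j : i < j -> j < n ->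
  restrict (cross i j) (word_of (iota 0 n)) = map (nth 0 (cross i j)) W2.
Proof.
move=> lt_ij lt_jn; rewrite (restrict_word_of (I := [:: i; j])) ?filter_mem_iota //=.
- by rewrite lt_ij.
- by rewrite lt_jn (ltn_trans lt_ij).
- by rewrite /cross !inE eqxx !orbT.
move=> l; rewrite mem_iota => /andP[_ lt_ln]; apply: mem_cross => //.
exact: ltn_trans lt_ij lt_jn.
Qed.

Lemma mem_word_block a : 0 < n -> a \in word_of (iota 0 n) ->
  exists2 k, k < n & a \in block k.
Proof.
move=> n_gt0; rewrite !mem_cat => /or3P[/flatten_mapP[k] | | /mapP[k]].
- rewrite mem_iota => /andP[_ lt_kn] a_k; exists k => //.
  by move: a_k; rewrite /block !inE => /orP[] ->; rewrite ?orbT.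
- by rewrite !inE orbb => /eqP ->; exists 0; rewrite // /block !inE eqxx !orbT.
- by rewrite mem_iota => /andP[_ lt_kn] ->; exists k; rewrite // /block inE eqxx.
Qed.

Variable S : monoid.
Hypothesis ytxxy_isoterm :
  forall x y t : nat, uniq [:: x; y; t] -> isoterm S [:: y; t; x; x; y].
Variable w : word.
Hypothesis word_sat : satisfies S (word_of (iota 0 n)) w.

Lemma isoterm_restrict_block k : k < n ->
  isoterm S (restrict (block k) (word_of (iota 0 n))).
Proof.
by move=> lt_kn; rewrite restrict_block //; apply: ytxxy_isoterm (block_uniq lt_kn).
Qed.

Lemma restrict_block_sat k : k < n ->
  restrict (block k) w = restrict (block k) (word_of (iota 0 n)).
Proof.
move=> lt_kn; apply: restrict_sat_isoterm word_sat (isoterm_restrict_block lt_kn) _.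
by rewrite restrict_block.
Qed.

Lemma restrict_cross_sat i j : i < j -> j < n ->
  restrict (cross i j) w = restrict (cross i j) (word_of (iota 0 n)).
Proof.
move=> lt_ij lt_jn; rewrite restrict_cross //.
apply: sat_nth_isoterm (cross_uniq lt_ij lt_jn) (isoterm_W2 ytxxy_isoterm) _ _ _ _ => //.
  by move=> a; rewrite mem_filter => /andP[].
by rewrite -restrict_cross //; apply: satisfies_filter.
Qed.

Lemma word_sat_letters : 0 < n -> {subset w <= word_of (iota 0 n)}.
Proof.
move=> n_gt0 a a_w; apply/negPn/negP => a_W; move: a_w; apply/negP.
apply: notin_sat_isoterm word_sat (isoterm_restrict_block n_gt0) _ a_W.
by rewrite restrict_block.
Qed.

Lemma restrict_pair_sat i j a b : i < n -> j < n -> a \in block i -> b \in block j ->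
  restrict [:: a; b] w = restrict [:: a; b] (word_of (iota 0 n)).
Proof.
wlog le_ij : i j a b / i <= j.
  move=> gen lt_in lt_jn a_i b_j; case: (leqP i j) => [le_ij | /ltnW le_ji].
    exact: gen le_ij lt_in lt_jn a_i b_j.
  have swap_ab : [:: b; a] =i [:: a; b] by move=> v; rewrite !inE orbC.
  by rewrite -!(eq_restrict _ swap_ab); apply: gen le_ji lt_jn lt_in b_j a_i.
move=> lt_in lt_jn a_i b_j; move: le_ij; rewrite leq_eqVlt => /orP[/eqP eq_ij | lt_ij].
  subst j; apply: restrict_sub_eq (restrict_block_sat lt_in) _.
  by move=> v; rewrite mem_seq2 => /orP[] /eqP ->.
have block_cross k : k \in [:: i; j] -> {subset block k <= cross i j}.
  by rewrite !inE => /orP[] /eqP -> v; rewrite !inE => /or3P[] ->; rewrite ?orbT.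
apply: restrict_sub_eq (restrict_cross_sat lt_ij lt_jn) _ => v.
rewrite mem_seq2 => /orP[] /eqP ->.
  by apply: (block_cross i) a_i; rewrite mem_seq2 eqxx.
by apply: (block_cross j) b_j; rewrite mem_seq2 eqxx orbT.
Qed.

End Word.

Theorem lemma3p7 (S : monoid)
  (H1 : forall x y t : nat, uniq [:: x; y; t] -> isoterm S [:: y; x; x; t; y])
  (H2 : forall x y t : nat, uniq [:: x; y; t] -> isoterm S [:: y; t; x; x; y]) :
  forall (n : nat) (x : nat) (z t : nat -> nat),
    1 <= n ->
    uniq (x :: [seq z i | i <- iota 0 n] ++ [seq t i | i <- iota 0 n]) ->
    isoterm S (flatten [seq [:: z i; t i] | i <- iota 0 n]
               ++ [:: x; x] ++ [seq z i | i <- iota 0 n]).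
Proof.
move=> n x z t n_gt0 letters_uniq w w_ne sat.
have in_block a : a \in w ++ word_of x z t (iota 0 n) ->
    exists2 k, k < n & a \in block x z t k.
  by rewrite mem_cat => /orP[/(word_sat_letters letters_uniq H2 sat n_gt0) |];
    apply: mem_word_block.
apply: restrict_pairs_inj => a b /in_block[i lt_in a_i] /in_block[j lt_jn b_j].
exact: (restrict_pair_sat letters_uniq H2 sat lt_in lt_jn a_i b_j).
Qed.
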